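(* Let $q$ be a prime power and $n$ a positive integer. Let $g, h\in \mathbb{F}_q[x]$ be relatively prime polynomials such that $g(x)$ divides $x^n-1$ and $x^n-1$ divides $g(x)\cdot h(x)$. Then for every polynomial $f\in \mathbb{F}_{q^n}[x]$, the polynomial $P_{f,g,h}(x)=f(L_g(x))+L_h(x)$ is a permutation polynomial of $\mathbb{F}_{q^n}$ if and only if $L_g(f(x))$ induces a permutation of the set $L_g(\mathbb{F}_{q^n})=\{L_g(c):c\in\mathbb{F}_{q^n}\}$. In particular, if $f(L_g(\mathbb{F}_{q^n}))\subseteq L_g(\mathbb{F}_{q^n})$, then $P_{f,g,h}$ is a permutation polynomial of $\mathbb{F}_{q^n}$ if and only if $f$ induces a permutation of $L_g(\mathbb{F}_{q^n})$.
   Context: For a polynomial $u(x)=\sum_{i=0}^m a_i x^i\in\mathbb{F}_q[x]$, its linearized $q$-associate is $L_u(x)=\sum_{i=0}^m a_i x^{q^i}$. A permutation polynomial of $\mathbb{F}_{q^n}$ is a polynomial inducing a bijection of $\mathbb{F}_{q^n}$. *)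

From HB Require Import structures.
From mathcomp Require Import all_boot all_order all_algebra all_field.
Set Implicit Arguments. Unset Strict Implicit. Unset Printing Implicit Defensive.
Import GRing.Theory.
Local Open Scope ring_scope.

(* Linearized q-associate of u = \sum a_i x^i in F[x], viewed in L[x]
   (coefficients embedded via F -> L):  L_u(x) = \sum a_i x^(q^i). *)
Definition linq (F : fieldType) (L : fieldExtType F) (q : nat) (u : {poly F})
  : {poly L} :=
  \sum_(i < size u) (u`_i)%:A%:P * 'X^(q ^ i).

Definition poly_image (L : fieldType) (p : {poly L}) : L -> Prop :=
  fun y => exists c, p.[c] = y.

Definition permutes_set (T : Type) (S : T -> Prop) (phi : T -> T) : Prop :=
  [/\ forall x, S x -> S (phi x),
      forall x y, S x -> S y -> phi x = phi y -> x = y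
    & forall y, S y -> exists x, S x /\ phi x = y].

Definition perm_poly (L : fieldType) (p : {poly L}) : Prop :=
  bijective (fun x : L => p.[x]).

From HB Require Import structures.
From mathcomp Require Import all_boot all_order all_algebra all_solvable all_field.
Set Implicit Arguments. Unset Strict Implicit. Unset Printing Implicit Defensive.
Import GRing.Theory FalgLfun.
Local Open Scope ring_scope.

(* Let s be the Frobenius x |-> x ^+ q, an F-linear endomorphism of L with
   s ^+ n = 1, so that L_u is the endomorphism u(s), and A = g(s), B = h(s)
   satisfy A B = 0 and, by Bezout, u A + w B = 1.  Then x |-> (A x, B x)
   identifies L with A(L) x B(L), where B(L) = ker A, and in these coordinates
   x |-> f (A x) + B x is triangular: its first coordinate is A f on A(L),
   and for a fixed first coordinate the second one is a translate of B, which
   is bijective on B(L).  So the map is bijective iff A f permutes A(L); as A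
   itself permutes A(L), this is equivalent to f permuting A(L) whenever f
   maps A(L) into itself. *)

Definition range_of (aT rT : Type) (phi : aT -> rT) : rT -> Prop :=
  fun y => exists x, phi x = y.

Lemma inj_surj_bij (aT : choiceType) (rT : eqType) (phi : aT -> rT) :
  injective phi -> (forall y, exists x, phi x = y) -> bijective phi.
Proof.
move=> phi_inj phi_onto.
have ex_pre y : exists x, phi x == y by have [x <-] := phi_onto y; exists x.
exists (fun y => xchoose (ex_pre y)) => [x | y]; last exact/eqP/(xchooseP (ex_pre y)).
by apply: phi_inj; apply/eqP/(xchooseP (ex_pre _)).
Qed.

Lemma eq_permutes_set (T : Type) (S1 S2 : T -> Prop) (phi psi : T -> T) :
  (forall x, S1 x <-> S2 x) -> phi =1 psi ->
  permutes_set S1 phi <-> permutes_set S2 psi.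
Proof.
suff sub S S' (f f' : T -> T) : (forall x, S x <-> S' x) -> f =1 f' ->
    permutes_set S f -> permutes_set S' f'.
  move=> eS ef; split; first exact: sub eS ef.
  by apply: sub => x; [split=> /eS | rewrite ef].
move=> eS ef [f_in f_inj f_onto]; split.
- by move=> x /eS /f_in; rewrite ef => /eS.
- by move=> x y /eS Sx /eS Sy; rewrite -!ef; apply: f_inj.
- by move=> y /eS /f_onto [x [/eS Sx <-]]; exists x; rewrite ef.
Qed.

Lemma permutes_set_comp (T : Type) (S : T -> Prop) (phi f : T -> T) :
  permutes_set S phi -> (forall x, S x -> S (f x)) ->
  permutes_set S (fun x => phi (f x)) <-> permutes_set S f.
Proof.
move=> [phi_in phi_inj phi_onto] f_in; split=> [[_ inj onto] | [_ inj onto]].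
- split=> // [x y Sx Sy fxy | y Sy]; first by apply: inj => //; rewrite fxy.
  have [x [Sx phi_fx]] := onto _ (phi_in y Sy).
  by exists x; split=> //; apply: phi_inj => //; apply: f_in.
- split=> [x /f_in /phi_in // | x y Sx Sy | y Sy].
    by move/(phi_inj _ _ (f_in _ Sx) (f_in _ Sy)); apply: inj.
  have [z [Sz <-]] := phi_onto y Sy; have [x [Sx <-]] := onto z Sz.
  by exists x.
Qed.

Section CoprimeAnnihilator.
Variables (K : fieldType) (V : falgType K) (s : 'End(V)) (g h : {poly K}).
Hypotheses (coprime_gh : coprimep g h) (ann_gh : horner_alg s (g * h) = 0).

Local Notation ev := (horner_alg s).
Local Notation A := (ev g).
Local Notation B := (ev h).

Lemma horner_alg_lfunM p r x : ev (p * r) x = ev p (ev r x).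
Proof. by rewrite mulrC rmorphM lfun_mulE. Qed.

Lemma horner_alg_lfun_comm p r x : ev p (ev r x) = ev r (ev p x).
Proof. by rewrite -!horner_alg_lfunM mulrC. Qed.

Lemma ev_gh0 x : A (B x) = 0.
Proof. by rewrite -horner_alg_lfunM ann_gh lfunE. Qed.

Lemma ev_hg0 x : B (A x) = 0.
Proof. by rewrite horner_alg_lfun_comm ev_gh0. Qed.

Lemma bezout_decomposition : exists u w, forall x, x = ev u (A x) + ev w (B x).
Proof.
have [[u w] /= uw1] := Bezout_eq1_coprimepP _ _ coprime_gh.
exists u, w => x.
by rewrite -!horner_alg_lfunM -add_lfunE -rmorphD uw1 rmorph1 id_lfunE.
Qed.

Lemma ker_inter0 x : A x = 0 -> B x = 0 -> x = 0.
Proof.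
have [u [w dec]] := bezout_decomposition.
by move=> Ax0 Bx0; rewrite (dec x) Ax0 Bx0 !raddf0 addr0.
Qed.

Lemma kerA_range z : A z = 0 -> range_of B z.
Proof.
have [u [w dec]] := bezout_decomposition.
move=> Az0; exists (ev w z).
by rewrite horner_alg_lfun_comm {2}(dec z) Az0 raddf0 add0r.
Qed.

Lemma kerB_range z : B z = 0 -> range_of A z.
Proof.
have [u [w dec]] := bezout_decomposition.
move=> Bz0; exists (ev u z).
by rewrite horner_alg_lfun_comm {2}(dec z) Bz0 raddf0 addr0.
Qed.

Lemma range_glue a b : exists x, A x = A a /\ B x = B b.
Proof.
have [u [w dec]] := bezout_decomposition.
have A_wB y : A (ev w (B y)) = 0 by rewrite horner_alg_lfun_comm ev_gh0 raddf0.
have B_uA y : B (ev u (A y)) = 0 by rewrite horner_alg_lfun_comm ev_hg0 raddf0.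
exists (ev u (A a) + ev w (B b)); rewrite !linearD /= A_wB B_uA addr0 add0r.
split; first by rewrite {2}(dec a) linearD /= A_wB addr0.
by rewrite {2}(dec b) linearD /= B_uA add0r.
Qed.

Lemma range_A_permutes : permutes_set (range_of A) A.
Proof.
split=> [x _ | _ _ [a <-] [b <-] Aab | _ [a <-]]; first by exists x.
- apply/eqP; rewrite -subr_eq0; apply/eqP.
  by apply: ker_inter0; rewrite linearB /= ?Aab ?subrr // !ev_hg0 subrr.
- have [x [Ax Bx]] := range_glue a 0.
  by exists x; split=> //; apply: kerB_range; rewrite Bx raddf0.
Qed.

Lemma bijective_fA_addB (f : V -> V) :
  bijective (fun x => f (A x) + B x) <-> permutes_set (range_of A) (fun x => A (f x)).
Proof.
have AP x : A (f (A x) + B x) = A (f (A x)) by rewrite linearD /= ev_gh0 addr0.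
split=> [[Pinv PK KP] | [_ inj onto]].
- split=> [x _ | _ _ [a <-] [b <-] Eab | _ [z <-]]; first by exists (f x).
  + have [t Bt] : range_of B (f (A a) - f (A b)).
      by apply: kerA_range; rewrite linearB /= Eab subrr.
    have [x [Ax Bx]] := range_glue b (a + t).
    suff <- : x = a by [].
    apply: (can_inj PK) => /=.
    by rewrite Ax Bx linearD /= Bt addrCA [f (A b) + _]addrC subrK addrC.
  + by exists (A (Pinv z)); split; [exists (Pinv z) | rewrite -AP KP].
- apply: inj_surj_bij => [x y /= Pxy | z].
  + have Axy : A x = A y by apply: inj; [exists x | exists y | rewrite -!AP Pxy].
    move: Pxy; rewrite Axy => /addrI Bxy.
    apply/eqP; rewrite -subr_eq0; apply/eqP.
    by apply: ker_inter0; rewrite linearB /= ?Axy ?Bxy subrr.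
  + have [_ [[a <-] Aa]] := onto (A z) (ex_intro _ z erefl).
    have [t Bt] : range_of B (z - f (A a)).
      by apply: kerA_range; rewrite linearB /= Aa subrr.
    have [x [Ax Bx]] := range_glue a t.
    by exists x; rewrite Ax Bx Bt addrC subrK.
Qed.

End CoprimeAnnihilator.

Section Frobenius.
Variables (F : finFieldType) (L : fieldExtType F).
Local Notation q := #|F|.

Lemma exprD_card (x y : L) : (x + y) ^+ q = x ^+ q + y ^+ q.
Proof.
have [p pr_p pFp] := finPcharP F.
have pLp : p \in [pchar L] by rewrite (pchar_lalg L).
have := abelem_pgroup (fin_ring_pchar_abelem pFp); rewrite /pgroup cardsT => p_q.
by rewrite exprDn_pchar // (eq_pnat _ (pcharf_eq pLp)).
Qed.

Definition frobenius_card (x : L) : L := x ^+ q.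

Lemma frobenius_card_is_linear : linear frobenius_card.
Proof.
move=> a x y; rewrite /frobenius_card exprD_card -mulr_algl exprMn.
by rewrite -[a%:A]/(in_alg L a) -rmorphXn expf_card mulr_algl.
Qed.

HB.instance Definition _ :=
  GRing.isLinear.Build F L L *:%R frobenius_card frobenius_card_is_linear.

Definition frobenius : 'End(L) := linfun frobenius_card.

Lemma frobeniusXE i x : (frobenius ^+ i) x = x ^+ (q ^ i).
Proof.
elim: i => [|i IHi]; first by rewrite expr0 expn0 expr1 id_lfunE.
by rewrite exprSr lfun_mulE IHi lfunE /= /frobenius_card -exprM expnSr.
Qed.

Lemma horner_linq (u : {poly F}) x : (linq L q u).[x] = horner_alg frobenius u x.
Proof.
rewrite -[u in RHS]coefK poly_def /linq horner_sum rmorph_sum sum_lfunE.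
apply: eq_bigr => i _.
rewrite hornerCM hornerXn -mul_polyC rmorphM /= horner_algC rmorphXn /= horner_algX.
by rewrite !mulr_algl scale_lfunE frobeniusXE.
Qed.

Lemma horner_alg_frobenius_Xn_sub1 : horner_alg frobenius ('X^(\dim {:L}) - 1) = 0.
Proof.
apply/lfunP => x; rewrite rmorphB rmorphXn rmorph1 /= horner_algX.
rewrite add_lfunE opp_lfunE frobeniusXE id_lfunE zero_lfunE.
have := Fermat's_little_theorem {:L}%AS x.
by rewrite memvf => /esym/eqP ->; rewrite subrr.
Qed.

End Frobenius.

Theorem proposition2p7 (F : finFieldType) (L : fieldExtType F) (n : nat)
    (n_gt0 : (0 < n)%N) (dimL : \dim {: L} = n)
    (g h : {poly F})
    (cop : coprimep g h)
    (g_dvd : g %| 'X^n - 1)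
    (dvd_gh : 'X^n - 1 %| g * h) :
  let q := #|F| in
  let Lg := linq L q g in
  let Lh := linq L q h in
  forall f : {poly L},
    (perm_poly (f \Po Lg + Lh) <->
       permutes_set (poly_image Lg) (fun x => (Lg \Po f).[x]))
    /\
    ((forall y, poly_image Lg y -> poly_image Lg f.[y]) ->
       (perm_poly (f \Po Lg + Lh) <->
          permutes_set (poly_image Lg) (fun x => f.[x]))).
Proof.
move=> q Lg Lh f.
pose A := horner_alg (frobenius L) g; pose B := horner_alg (frobenius L) h.
have ann_gh : horner_alg (frobenius L) (g * h) = 0.
  have [k ->] := dvdpP _ _ dvd_gh.
  by rewrite rmorphM /= -dimL horner_alg_frobenius_Xn_sub1 mulr0.
have image_Lg y : range_of A y <-> poly_image Lg y.
  by split=> -[c <-]; exists c; rewrite horner_linq.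
have perm_P : perm_poly (f \Po Lg + Lh) <-> bijective (fun x => f.[A x] + B x).
  by split=> P_bij; apply: (eq_bij P_bij) => x;
    rewrite hornerD horner_comp !horner_linq.
have reduction := iff_trans perm_P (bijective_fA_addB cop ann_gh (fun y => f.[y])).
split=> [|f_in]; apply: (iff_trans reduction).
  by apply: eq_permutes_set => // x; rewrite horner_comp horner_linq.
have f_range y : range_of A y -> range_of A f.[y].
  by move=> /image_Lg /f_in /image_Lg.
apply: iff_trans (permutes_set_comp (range_A_permutes cop ann_gh) f_range) _.
exact: eq_permutes_set.
Qed.
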